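(* Suppose $X$ is a polyhedron and let $\beta\in\mathcal{A}$. Let $P=-\mathcal{A}^TX+N_\beta^\circ$ (Minkowski sum). Then a vector $\nu\in N_\beta\setminus\{0\}$ is an $X$-circuit of $\mathcal{A}$ if and only if $\operatorname{cone}\{\nu\}=\{t\nu:t\ge0\}$ is a ray (one-dimensional cone) of the outer normal fan $\mathcal{O}(P)$. Consequently, when $X$ is polyhedral there are only finitely many normalized $X$-circuits of $\mathcal{A}$.
   Context: $X\subset\mathbb{R}^n$ is a nonempty closed convex set and $\mathcal{A}\subset\mathbb{R}^n$ is a nonempty finite set. $\mathbb{R}^{\mathcal{A}}$ denotes real vectors indexed by $\mathcal{A}$. $\mathcal{A}$ is viewed as the linear map $\mathbb{R}^{\mathcal{A}}\to\mathbb{R}^n$, $\mathcal{A}\nu=\sum_{\alpha\in\mathcal{A}}\alpha\nu_\alpha$, with adjoint $\mathcal{A}^T:\mathbb{R}^n\to\mathbb{R}^{\mathcal{A}}$, $(\mathcal{A}^Tx)_\alpha=\alpha^Tx$. The support function of a convex set $S$ is $\sigma_S(y)=\sup\{y^Tx:x\in S\}\in\mathbb{R}\cup\{+\infty\}$. For $\beta\in\mathcal{A}$, $N_\beta=\{\nu\in\mathbb{R}^{\mathcal{A}}:\nu_\alpha\ge0\ \forall\alpha\neq\beta,\ \sum_{\alpha}\nu_\alpha=0\}$, and $N_\beta^\circ=\{w:w^T\nu\le0\ \forall\nu\in N_\beta\}$ is its polar. A vector $\nu^\star\in N_\beta$ is an $X$-circuit of $\mathcal{A}$ if (1) $\nu^\star\neq0$,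 (2) $\sigma_X(-\mathcal{A}\nu^\star)<\infty$, and (3) $\nu^\star$ cannot be written as a convex combination of two non-proportional vectors $\nu^{(1)},\nu^{(2)}\in N_\beta$ such that the map $\nu\mapsto\sigma_X(-\mathcal{A}\nu)$ is affine on the segment $[\nu^{(1)},\nu^{(2)}]$. An $X$-circuit $\lambda\in N_\beta$ is normalized if $\lambda_\beta=-1$. For a polyhedron $P$ and a face $F$ of $P$, the outer normal cone is $\mathsf{N}_P(F)=\{w:z^Tw=\sigma_P(w)\ \forall z\in F\}$, and the outer normal fan is $\mathcal{O}(P)=\{\mathsf{N}_P(F):F\text{ a face of }P\}$. *)

From HB Require Import structures.
From mathcomp Require Import all_boot all_order all_algebra.
From mathcomp Require Import boolp classical_sets cardinality reals constructive_ereal ereal.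
Set Implicit Arguments. Unset Strict Implicit. Unset Printing Implicit Defensive.
Import Order.TTheory GRing.Theory Num.Theory.
Local Open Scope ring_scope.
Local Open Scope classical_set_scope.

Section Defs.
Variable R : realType.

Definition dotv (k : nat) (u v : 'rV[R]_k) : R := \sum_(i < k) u 0 i * v 0 i.

Definition supp_fun (k : nat) (S : set 'rV[R]_k) (y : 'rV[R]_k) : \bar R :=
  ereal_sup [set (dotv y x)%:E | x in S].

Definition is_polyhedron (k : nat) (S : set 'rV[R]_k) : Prop :=
  exists (p : nat) (C : 'I_p -> 'rV[R]_k) (d : 'I_p -> R),
    S = [set x | forall j, dotv (C j) x <= d j].

(* the finite set A = {a_0,...,a_(m-1)} (a injective) as the map R^A -> R^n *)
Definition Amap (n m : nat) (a : 'I_m -> 'rV[R]_n) (nu : 'rV[R]_m) : 'rV[R]_n :=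
  \sum_(i < m) nu 0 i *: a i.

Definition AmapT (n m : nat) (a : 'I_m -> 'rV[R]_n) (x : 'rV[R]_n) : 'rV[R]_m :=
  \row_(i < m) dotv (a i) x.

Definition Nbeta (m : nat) (beta : 'I_m) : set 'rV[R]_m :=
  [set nu | (forall i, i != beta -> 0 <= nu 0 i) /\ \sum_(i < m) nu 0 i = 0].

Definition polar (k : nat) (S : set 'rV[R]_k) : set 'rV[R]_k :=
  [set w | forall nu, S nu -> dotv w nu <= 0].

Definition proportional (k : nat) (u v : 'rV[R]_k) : Prop :=
  exists c : R, u = c *: v \/ v = c *: u.

Definition affine_on_segment (k : nat) (f : 'rV[R]_k -> \bar R) (u v : 'rV[R]_k) : Prop :=
  exists c d : R, forall t : R, 0 <= t <= 1 -> f (u + t *: (v - u)) = (c + t * d)%:E.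

Definition X_circuit (n m : nat) (X : set 'rV[R]_n) (a : 'I_m -> 'rV[R]_n)
    (beta : 'I_m) (nu : 'rV[R]_m) : Prop :=
  [/\ Nbeta beta nu,
      nu != 0,
      (supp_fun X (- Amap a nu) < +oo)%E &
      ~ (exists nu1 nu2 : 'rV[R]_m, exists lam : R,
           [/\ Nbeta beta nu1 /\ Nbeta beta nu2, ~ proportional nu1 nu2,
               0 < lam < 1,
               nu = lam *: nu1 + (1 - lam) *: nu2 &
               affine_on_segment (fun v => supp_fun X (- Amap a v)) nu1 nu2])].

Definition Pset (n m : nat) (X : set 'rV[R]_n) (a : 'I_m -> 'rV[R]_n) (beta : 'I_m)
  : set 'rV[R]_m :=
  [set - AmapT a x + w | x in X & w in polar (Nbeta beta)].

(* faces of a polyhedron (exposed faces; includes P itself and possibly the empty set) *)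
Definition is_face (k : nat) (P F : set 'rV[R]_k) : Prop :=
  exists w : 'rV[R]_k, F = [set z | P z /\ forall z', P z' -> dotv w z' <= dotv w z].

Definition normal_cone (k : nat) (P F : set 'rV[R]_k) : set 'rV[R]_k :=
  [set w | forall z, F z -> (dotv z w)%:E = supp_fun P w].

Definition outer_normal_fan (k : nat) (P : set 'rV[R]_k) : set (set 'rV[R]_k) :=
  [set N | exists F, is_face P F /\ N = normal_cone P F].

Definition cone1 (k : nat) (nu : 'rV[R]_k) : set 'rV[R]_k :=
  [set t *: nu | t in [set t : R | 0 <= t]].

End Defs.

From HB Require Import structures.
From mathcomp Require Import all_boot all_order all_algebra.
From mathcomp Require Import boolp classical_sets cardinality reals constructive_ereal ereal.
From mathcomp Require Import ring lra.
Set Implicit Arguments. Unset Strict Implicit. Unset Printing Implicit Defensive.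
Import Order.TTheory GRing.Theory Num.Theory.
Local Open Scope ring_scope.
Local Open Scope classical_set_scope.

(* The key identity is sigma_P(w) = sigma_X(-A w) for w in N_beta.
   - A ray cone{nu} = N_P(F) forces circuits: if sigma is affine on a segment
     through nu, the endpoints are outer normals of F too, hence on the ray.
   - Conversely, for a circuit nu maximized by -A^T x0 on P, every outer normal
     w of the face argmax_P nu lies in N_beta, vanishes where nu does, and (by a
     lexicographic perturbation of the linear program max {-A nu . x | x in X})
     nu + e w and nu - e w share that maximizer for small e > 0; sigma is then
     affine between them, so w must lie on the ray of nu.
   - A normalized circuit is determined by the KKT-active constraints at its
     optimum together with its zero pattern, which range over a finite type.
   The linear programming facts (attainment, KKT, lexicographic perturbation)
   are derived from Farkas' lemma, proved by Fourier--Motzkin elimination. *)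

Section Bilinear.
Context {R : realType}.

Lemma dotvC k (u v : 'rV[R]_k) : dotv u v = dotv v u.
Proof. by apply: eq_bigr => i _; rewrite mulrC. Qed.

Lemma dotvDl k (u v w : 'rV[R]_k) : dotv (u + v) w = dotv u w + dotv v w.
Proof. by rewrite /dotv -big_split; apply: eq_bigr => i _; rewrite !mxE mulrDl. Qed.

Lemma dotvZl k s (u w : 'rV[R]_k) : dotv (s *: u) w = s * dotv u w.
Proof. by rewrite /dotv mulr_sumr; apply: eq_bigr => i _; rewrite !mxE mulrA. Qed.

Lemma dotv0l k (w : 'rV[R]_k) : dotv 0 w = 0.
Proof. by rewrite /dotv big1 // => i _; rewrite mxE mul0r. Qed.

Lemma dotvNl k (u w : 'rV[R]_k) : dotv (- u) w = - dotv u w.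
Proof. by rewrite -scaleN1r dotvZl mulN1r. Qed.

Lemma dotvBl k (u v w : 'rV[R]_k) : dotv (u - v) w = dotv u w - dotv v w.
Proof. by rewrite dotvDl dotvNl. Qed.

Lemma dotvDr k (u v w : 'rV[R]_k) : dotv w (u + v) = dotv w u + dotv w v.
Proof. by rewrite dotvC dotvDl !(dotvC w). Qed.

Lemma dotvZr k s (u w : 'rV[R]_k) : dotv w (s *: u) = s * dotv w u.
Proof. by rewrite dotvC dotvZl dotvC. Qed.

Lemma dotv0r k (w : 'rV[R]_k) : dotv w 0 = 0.
Proof. by rewrite dotvC dotv0l. Qed.

Lemma dotvNr k (u w : 'rV[R]_k) : dotv w (- u) = - dotv w u.
Proof. by rewrite dotvC dotvNl dotvC. Qed.

Lemma dotvBr k (u v w : 'rV[R]_k) : dotv w (u - v) = dotv w u - dotv w v.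
Proof. by rewrite dotvDr dotvNr. Qed.

Lemma dotv_suml k (I : finType) (F : I -> 'rV[R]_k) w :
  dotv (\sum_i F i) w = \sum_i dotv (F i) w.
Proof.
by rewrite /dotv exchange_big; apply: eq_bigr => j _; rewrite summxE mulr_suml.
Qed.

Definition unitv k (i : 'I_k) : 'rV[R]_k := \row_j (j == i)%:R.

Lemma dotv_unitvr k (u : 'rV[R]_k) i : dotv u (unitv i) = u 0 i.
Proof.
rewrite /dotv (bigD1 i) //= !mxE eqxx mulr1 big1 ?addr0 // => j /negbTE ji.
by rewrite !mxE ji mulr0.
Qed.

Lemma dotv_unitvl k (u : 'rV[R]_k) i : dotv (unitv i) u = u 0 i.
Proof. by rewrite dotvC dotv_unitvr. Qed.

Lemma sum_unitv k (i : 'I_k) : \sum_j unitv i 0 j = 1.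
Proof.
rewrite (bigD1 i) //= mxE eqxx big1 ?addr0 // => j /negbTE ji.
by rewrite mxE ji.
Qed.

End Bilinear.

(* A pair (h, c) is a
   consequence of the system G y <= b when h y <= c is a nonnegative combination
   of its inequalities; an infeasible system has the contradiction 0 <= c < 0 as
   a consequence. *)
Section Farkas.
Context {R : realType}.

Definition nonneg_comb k (I : finType) (G : I -> 'rV[R]_k) (b : I -> R)
    (h : 'rV[R]_k) (c : R) :=
  exists2 lam : I -> R, forall i, 0 <= lam i &
    h = \sum_i lam i *: G i /\ c = \sum_i lam i * b i.

Section NonnegComb.
Variables (k : nat) (I : finType) (G : I -> 'rV[R]_k) (b : I -> R).

Lemma nonneg_comb0 : nonneg_comb G b 0 0.
Proof.
exists (fun=> 0) => //; split; rewrite big1 // => i _; first by rewrite scale0r.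
by rewrite mul0r.
Qed.

Lemma nonneg_combD h c h' c' : nonneg_comb G b h c -> nonneg_comb G b h' c' ->
  nonneg_comb G b (h + h') (c + c').
Proof.
move=> [l l0 [-> ->]] [l' l'0 [-> ->]].
exists (fun i => l i + l' i) => [i|]; first by rewrite addr_ge0.
by split; rewrite -big_split; apply: eq_bigr => i _; rewrite ?scalerDl ?mulrDl.
Qed.

Lemma nonneg_combZ s h c : 0 <= s -> nonneg_comb G b h c ->
  nonneg_comb G b (s *: h) (s * c).
Proof.
move=> s0 [l l0 [-> ->]].
exists (fun i => s * l i) => [i|]; first by rewrite mulr_ge0.
split; first by rewrite scaler_sumr; apply: eq_bigr => i _; rewrite scalerA.
by rewrite mulr_sumr; apply: eq_bigr => i _; rewrite mulrA.
Qed.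

Lemma nonneg_comb_row i : nonneg_comb G b (G i) (b i).
Proof.
exists (fun j => (j == i)%:R) => [j|]; first by rewrite ler0n.
split; rewrite (bigD1 i) //= eqxx ?scale1r ?mul1r big1 ?addr0 // => j /negbTE ->.
  by rewrite scale0r.
by rewrite mul0r.
Qed.

Lemma nonneg_comb_sum (J : finType) (mu : J -> R) (H : J -> 'rV[R]_k) (e : J -> R) :
  (forall j, 0 <= mu j) -> (forall j, nonneg_comb G b (H j) (e j)) ->
  nonneg_comb G b (\sum_j mu j *: H j) (\sum_j mu j * e j).
Proof.
move=> mu0 He; apply: (big_rec2 (fun x y => nonneg_comb G b x y)).
  exact: nonneg_comb0.
by move=> j y1 y2 _ Hy; apply: nonneg_combD => //; apply: nonneg_combZ.
Qed.

End NonnegComb.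

Lemma finite_interpolation (I : finType) (P Q : pred I) (lo up : I -> R) :
  (forall p q, P p -> Q q -> lo q <= up p) ->
  exists y0, (forall q, Q q -> lo q <= y0) /\ (forall p, P p -> y0 <= up p).
Proof.
move=> H; pose M := \sum_(p | P p) `|up p|.
exists (\big[Num.max/(- M)]_(q | Q q) lo q); split.
  by move=> q Qq; rewrite (bigD1 q) //= le_max lexx.
move=> p Pp; apply: (big_rec (fun y => y <= up p)).
  apply: lerNnormlW; rewrite /M (bigD1 p) //= lerDl sumr_ge0 // => i _.
by move=> q y Qq Hy; rewrite ge_max Hy andbT; exact: H.
Qed.

Definition vcons k (x : R) (z : 'rV[R]_k) : 'rV[R]_k.+1 :=
  \row_(j < k.+1) oapp (fun j' => z 0 j') x (unlift ord0 j).
Definition vtail k (u : 'rV[R]_k.+1) : 'rV[R]_k := \row_(j < k) u 0 (lift ord0 j).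

Lemma vcons_tail k (u : 'rV[R]_k.+1) : vcons (u 0 ord0) (vtail u) = u.
Proof.
by apply/rowP => j; rewrite !mxE; case: (unliftP ord0 j) => [j'|] -> //=; rewrite mxE.
Qed.

Lemma dotv_vcons k x0 y0 (x y : 'rV[R]_k) :
  dotv (vcons x0 x) (vcons y0 y) = x0 * y0 + dotv x y.
Proof.
rewrite /dotv big_ord_recl !mxE unlift_none /=; congr (_ + _).
by apply: eq_bigr => i _; rewrite !mxE liftK.
Qed.

Lemma vcons0_lin k (J : finType) (mu : J -> R) (H : J -> 'rV[R]_k) :
  vcons 0 (\sum_j mu j *: H j) = \sum_j mu j *: vcons 0 (H j).
Proof.
apply/rowP => i; rewrite summxE mxE.
case: (unliftP ord0 i) => [j'|] -> /=.
  by rewrite summxE; apply: eq_bigr => j _; rewrite !mxE liftK.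
by rewrite big1 // => j _; rewrite !mxE unlift_none /= mulr0.
Qed.

Lemma vcons00 k : vcons 0 (0 : 'rV[R]_k) = 0.
Proof. by apply/rowP => j; rewrite !mxE; case: (unlift ord0 j) => //= j'; rewrite mxE. Qed.

(* One Fourier--Motzkin step eliminates the first coordinate of G y <= b: keep
   the rows with head 0, and combine each row with positive head with each row
   with negative head so that the heads cancel. *)
Section FourierMotzkin.
Variables (k : nat) (I : finType) (G : I -> 'rV[R]_k.+1) (b : I -> R).

Local Notation hd i := (G i 0 ord0).
Local Notation tl i := (vtail (G i)).

Definition fm_cancels (pq : I * I) := (0 < hd pq.1) && (hd pq.2 < 0).

Definition fm_rows (j : I + I * I) : 'rV[R]_k :=
  match j with
  | inl i => if hd i == 0 then tl i else 0
  | inr pq => if fm_cancels pq then (- hd pq.2) *: tl pq.1 + hd pq.1 *: tl pq.2 else 0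
  end.

Definition fm_rhs (j : I + I * I) : R :=
  match j with
  | inl i => if hd i == 0 then b i else 0
  | inr pq => if fm_cancels pq then (- hd pq.2) * b pq.1 + hd pq.1 * b pq.2 else 0
  end.

Lemma row_vcons i : G i = vcons (hd i) (tl i).
Proof. by rewrite vcons_tail. Qed.

Lemma fm_lift z : (forall j, dotv (fm_rows j) z <= fm_rhs j) ->
  exists y, forall i, dotv (G i) y <= b i.
Proof.
move=> Hz.
have [|y0 [Hlo Hup]] := @finite_interpolation I (fun p => 0 < hd p) (fun q => hd q < 0)
  (fun q => (b q - dotv (tl q) z) / hd q) (fun p => (b p - dotv (tl p) z) / hd p).
  move=> p q /= ap aq; have := Hz (inr (p, q)).
  rewrite /= /fm_cancels ap aq /= dotvDl !dotvZl => h.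
  by rewrite ler_pdivlMr // mulrAC ler_ndivrMr //; nra.
exists (vcons y0 z) => i; rewrite row_vcons dotv_vcons.
case: (ltrgtP (hd i) 0) => ai.
- by have := Hlo i ai; rewrite /= ler_ndivrMr // => h; nra.
- by have := Hup i ai; rewrite /= ler_pdivlMr // => h; nra.
- by have := Hz (inl i); rewrite /= ai eqxx mul0r add0r.
Qed.

Lemma fm_rows_comb j : nonneg_comb G b (vcons 0 (fm_rows j)) (fm_rhs j).
Proof.
case: j => [i|[p q]] /=.
  case: eqP => [ai|_]; last by rewrite vcons00; exact: nonneg_comb0.
  by rewrite -ai -row_vcons; exact: nonneg_comb_row.
case: ifP => [/andP[ap aq]|_]; last by rewrite vcons00; exact: nonneg_comb0.
have -> : vcons 0 ((- hd q) *: tl p + hd p *: tl q) = (- hd q) *: G p + hd p *: G q.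
  apply/rowP => j; rewrite !mxE; case: (unliftP ord0 j) => [j'|] -> /=.
    by rewrite !mxE.
  by ring.
by apply: nonneg_combD; apply: nonneg_combZ; rewrite ?oppr_ge0 ?ltW //;
  exact: nonneg_comb_row.
Qed.

End FourierMotzkin.

Lemma farkas k (I : finType) (G : I -> 'rV[R]_k) (b : I -> R) :
  ~ (exists y, forall i, dotv (G i) y <= b i) ->
  exists2 c, c < 0 & nonneg_comb G b 0 c.
Proof.
elim: k I G b => [|k IH] I G b Hinf.
  have [[i bi]|Hn] := pselect (exists i, b i < 0).
    exists (b i) => //; rewrite (_ : 0 = G i); first exact: nonneg_comb_row.
    by apply/rowP => -[].
  exfalso; apply: Hinf; exists 0 => i; rewrite /dotv big_ord0 leNgt.
  by apply/negP => bi; apply: Hn; exists i.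
have Hinf' : ~ exists z, forall j, dotv (fm_rows G j) z <= fm_rhs G b j.
  by move=> [z /fm_lift]; exact: Hinf.
have [c c0 [mu mu0 [H0 Hc]]] := IH _ _ _ Hinf'.
exists c => //; rewrite Hc -vcons00 H0 vcons0_lin.
exact: nonneg_comb_sum (fm_rows_comb G b).
Qed.

Lemma farkas_slack (I : finType) k (G : I -> 'rV[R]_k) (b : I -> R) :
  ~ (exists y, forall i, dotv (G i) y <= b i) ->
  exists2 lam : I -> R, (forall i, 0 <= lam i) & exists2 c, c < 0 &
    forall y, c = \sum_i lam i * (b i - dotv (G i) y).
Proof.
move=> /farkas [c c0 [lam l0 [H0 Hc]]]; exists lam => //; exists c => // y.
have -> : \sum_i lam i * (b i - dotv (G i) y) =
          \sum_i lam i * b i - dotv (\sum_i lam i *: G i) y.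
  by rewrite dotv_suml -sumrB; apply: eq_bigr => i _; rewrite dotvZl mulrBr.
by rewrite -H0 dotv0l subr0.
Qed.

End Farkas.

Lemma eventually_all {R : realType} (I : finType) (Q : I -> R -> Prop) :
  (forall i, exists2 del, 0 < del & forall t, 0 < t <= del -> Q i t) ->
  exists2 del, 0 < del & forall i t, 0 < t <= del -> Q i t.
Proof.
move=> H; suff [del d0 Hd] : exists2 del, 0 < del &
    forall i t, i \in enum I -> 0 < t <= del -> Q i t.
  by exists del => // i t; apply: Hd; rewrite mem_enum.
elim: (enum I) => [|i s [del d0 Hd]]; first by exists 1.
have [del' d0' Hd'] := H i.
exists (Num.min del del'); first by rewrite lt_min d0 d0'.
move=> j t; rewrite inE => /orP[/eqP ->|js] /andP[t0]; rewrite le_min => /andP[t1 t2].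
  by apply: Hd'; rewrite t0.
by apply: Hd => //; rewrite t0.
Qed.

Section LinearProgramming.
Context {R : realType}.
Variables (n p : nat) (C : 'I_p -> 'rV[R]_n) (d : 'I_p -> R).

Definition in_poly (x : 'rV[R]_n) := forall j, dotv (C j) x <= d j.

Definition active (x0 : 'rV[R]_n) (j : 'I_p) := dotv (C j) x0 == d j.

Lemma feasible_direction x0 y : in_poly x0 ->
  (forall j, active x0 j -> dotv (C j) y <= 0) ->
  exists2 t, 0 < t & in_poly (x0 + t *: y).
Proof.
move=> hx hy.
have [j|del d0 Hd] := @eventually_all _ _ (fun j t => dotv (C j) (x0 + t *: y) <= d j).
  have [e|ne] := eqVneq (dotv (C j) x0) (d j).
    exists 1 => // t /andP[t0 _]; rewrite dotvDr dotvZr e.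
    by have := hy j (introT eqP e); nra.
  have lt : dotv (C j) x0 < d j by rewrite lt_neqAle ne hx.
  have n0 : 0 < `|dotv (C j) y| + 1 by rewrite ltr_wpDl.
  exists ((d j - dotv (C j) x0) / (`|dotv (C j) y| + 1)).
    by rewrite divr_gt0 // subr_gt0.
  move=> t /andP[t0]; rewrite ler_pdivlMr // dotvDr dotvZr => h.
  by have := ler_norm (dotv (C j) y); have := normr_ge0 (dotv (C j) y); nra.
by exists del => // j; apply: Hd; rewrite d0 lexx.
Qed.

(* A linear form bounded above on a nonempty polyhedron attains its maximum:
   otherwise {C x <= d, c x >= sup} is infeasible, and its Farkas certificate
   bounds c x away from the supremum. *)
Lemma lp_attain c M : (exists x, in_poly x) -> (forall x, in_poly x -> dotv c x <= M) ->
  exists2 x0, in_poly x0 & forall x, in_poly x -> dotv c x <= dotv c x0.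
Proof.
move=> [x1 hx1] hM.
pose E := [set dotv c x | x in in_poly].
have hs : has_sup E.
  by split; [exists (dotv c x1), x1 | exists M => _ [x hx <-]; apply: hM].
have [[x0 [h1 h2]]|Hn] := pselect (exists x0, in_poly x0 /\ sup E <= dotv c x0).
  by exists x0 => // x hx; apply: le_trans h2; apply: sup_upper_bound => //; exists x.
exfalso.
pose G (i : 'I_p + 'I_1) := match i with inl j => C j | inr _ => - c end : 'rV[R]_n.
pose b (i : 'I_p + 'I_1) := match i with inl j => d j | inr _ => - sup E end : R.
have [[y hy]|lam l0 [k k0 Hk]] := @farkas_slack R ('I_p + 'I_1)%type _ G b.
  apply: Hn; exists y; split; first by move=> j; apply: (hy (inl j)).
  by have := hy (inr ord0); rewrite /= dotvNl lerN2.
set th := lam (inr ord0).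
have key x : in_poly x -> th * (dotv c x - sup E) <= k.
  move=> hx; rewrite (Hk x) big_sumType big_ord1 /= dotvNl.
  have : 0 <= \sum_j lam (inl j) * (d j - dotv (C j) x).
    by rewrite sumr_ge0 // => j _; rewrite mulr_ge0 // subr_ge0.
  by rewrite -/th; lra.
have th0 : 0 < th.
  rewrite lt_neqAle l0 andbT; apply/eqP => t00.
  by have := key _ hx1; rewrite -t00 mul0r; lra.
have /(@sup_adherent _ E)/(_ hs) [_ [x hx <-] he] : 0 < - k / th.
  by rewrite divr_gt0 // oppr_gt0.
by have := key x hx; rewrite mulrC -ler_pdivlMr //; lra.
Qed.

Lemma lp_kkt c x0 : in_poly x0 -> (forall x, in_poly x -> dotv c x <= dotv c x0) ->
  exists lam : 'I_p -> R, [/\ forall j, 0 <= lam j,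
    forall j, 0 < lam j -> dotv (C j) x0 = d j &
    forall y, dotv c y = \sum_j lam j * dotv (C j) y].
Proof.
move=> hx0 hmax.
pose G (i : 'I_p + 'I_1) := match i with inl j => if active x0 j then C j else 0 | inr _ => - c end.
pose b (i : 'I_p + 'I_1) := match i with inl j => 0 | inr _ => - 1 end : R.
have [[y hy]|lam l0 [k k0 Hk]] := @farkas_slack R ('I_p + 'I_1)%type _ G b.
  have [j e|t t0 ht] := @feasible_direction x0 y hx0.
    by have := hy (inl j); rewrite /= e.
  have := hmax _ ht; have := hy (inr ord0).
  by rewrite /= dotvNl lerN2 dotvDr dotvZr; nra.
set th := lam (inr ord0) in Hk.
have Hk0 : k = - th.
  rewrite (Hk 0) big_sumType big_ord1 /= big1 => [|j _]; last first.
    by rewrite dotv0r subr0 mulr0.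
  by rewrite dotv0r add0r subr0 mulrN1.
have th0 : 0 < th by lra.
pose mu j := if active x0 j then lam (inl j) / th else 0.
exists mu; split.
- by move=> j; rewrite /mu; case: ifP => // _; rewrite divr_ge0 // ltW.
- by move=> j; rewrite /mu; case: ifP => [/eqP //|_]; rewrite ltxx.
move=> y; have := Hk y; rewrite big_sumType big_ord1 /= dotvNl Hk0.
have -> : \sum_j lam (inl j) * (0 - dotv (G (inl j)) y) =
          - (th * \sum_j mu j * dotv (C j) y).
  rewrite mulr_sumr -sumrN; apply: eq_bigr => j _ /=; rewrite /mu.
  case: ifP => _; last by rewrite dotv0l subr0 mulr0 mul0r mulr0 oppr0.
  by field; rewrite gt_eqF.
by move=> h; apply: (mulfI (negbT (gt_eqF th0))); rewrite -/th in h; lra.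
Qed.

(* The face of the polyhedron on which a linear form c attains its maximum is cut
   out by turning some set J of constraints into equalities (those with positive
   KKT multiplier). *)
Lemma lp_optimal_face c x0 : in_poly x0 ->
  (forall x, in_poly x -> dotv c x <= dotv c x0) ->
  exists J : {set 'I_p}, forall x, in_poly x ->
    (forall x', in_poly x' -> dotv c x' <= dotv c x) <->
    (forall j, j \in J -> dotv (C j) x = d j).
Proof.
move=> hx0 m1; have [lam [l0 lc lid]] := lp_kkt hx0 m1.
exists [set j | 0 < lam j]%SET => x hx.
have lam0 j : ~~ (0 < lam j) -> lam j = 0.
  by rewrite -leNgt => lj; apply/eqP; rewrite eq_le lj l0.
have slack : dotv c x0 - dotv c x = \sum_j lam j * (d j - dotv (C j) x).
  rewrite !lid -sumrB; apply: eq_bigr => j _; rewrite -mulrBr.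
  by have [/lc -> //|/lam0 ->] := boolP (0 < lam j); rewrite !mul0r.
have term_ge0 j : 0 <= lam j * (d j - dotv (C j) x) by rewrite mulr_ge0 // subr_ge0.
split=> [xmax j|tight x' hx'].
  rewrite inE => lj; have := xmax x0 hx0; have := m1 x hx => h1 h2.
  have /psumr_eq0P/(_ j isT) : \sum_j lam j * (d j - dotv (C j) x) = 0.
    by rewrite -slack; lra.
  by move=> /(_ (fun j _ => term_ge0 j)) /eqP; rewrite mulf_eq0 gt_eqF //= subr_eq0 => /eqP.
have : \sum_j lam j * (d j - dotv (C j) x) = 0.
  apply: big1 => j _; have [lj|/lam0 ->] := boolP (0 < lam j); last by rewrite mul0r.
  by rewrite tight ?inE // subrr mulr0.
by rewrite -slack; have := m1 x' hx'; lra.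
Qed.

(* The Farkas part of the lexicographic perturbation lemma below: if x0 maximizes
   c1, and x0 minimizes c2 on the face where c1 is maximal, then some multipliers
   t1 >= 0, t2 > 0 compare the two forms on all feasible displacements. *)
Lemma lex_certificate c1 c2 x0 : in_poly x0 ->
  (forall x, in_poly x -> dotv c1 x <= dotv c1 x0) ->
  (forall x, in_poly x -> dotv c1 x = dotv c1 x0 -> dotv c2 x0 <= dotv c2 x) ->
  exists t1 t2, [/\ 0 <= t1, 0 < t2 &
    forall x, in_poly x -> t1 * dotv c1 (x - x0) <= t2 * dotv c2 (x - x0)].
Proof.
move=> hx0 m1 h12.
pose G (i : 'I_p + bool) := match i with inl j => if active x0 j then C j else 0
                       | inr true => c2 | inr false => - c1 end.
pose b (i : 'I_p + bool) := match i with inl j => 0 | inr true => - 1 | inr false => 0 end : R.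
have [[y hy]|lam l0 [k k0 Hk]] := @farkas_slack R ('I_p + bool)%type _ G b.
  have [j e|t t0 ht] := @feasible_direction x0 y hx0.
    by have := hy (inl j); rewrite /= e.
  have := hy (inr true); have := hy (inr false); rewrite /= dotvNl oppr_le0 => h1 h2.
  have := m1 _ ht; rewrite dotvDr dotvZr => h3.
  have e1 : dotv c1 (x0 + t *: y) = dotv c1 x0 by rewrite dotvDr dotvZr; nra.
  by have := h12 _ ht e1; rewrite dotvDr dotvZr; nra.
exists (lam (inr false)), (lam (inr true)).
have Hk0 : k = - lam (inr true).
  rewrite (Hk 0) big_sumType big_bool /= big1 => [|j _]; last first.
    by rewrite dotv0r subr0 mulr0.
  by rewrite !dotv0r !subr0 mulr0 add0r addr0 mulrN1.
split => [||x hx]; [exact: l0 | lra |].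
have := Hk (x - x0); rewrite big_sumType big_bool /= dotvNl.
have : 0 <= \sum_(j < p) lam (inl j) * (0 - dotv (if active x0 j then C j else 0) (x - x0)).
  apply: sumr_ge0 => j _; apply: mulr_ge0 => //=.
  case: ifP => [/eqP e|_]; last by rewrite dotv0l subr0.
  by rewrite dotvBr e sub0r oppr_ge0 subr_le0.
by lra.
Qed.

Lemma lp_lex_perturb c1 c2 x0 : in_poly x0 ->
  (forall x, in_poly x -> dotv c1 x <= dotv c1 x0) ->
  (forall x, in_poly x -> dotv c2 x <= dotv c2 x0) ->
  (forall x, in_poly x -> dotv c1 x = dotv c1 x0 -> dotv c2 x0 <= dotv c2 x) ->
  exists2 eps, 0 < eps & forall e, 0 < e <= eps ->
    forall x, in_poly x -> dotv (c1 - e *: c2) x <= dotv (c1 - e *: c2) x0.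
Proof.
move=> hx0 m1 m2 h12.
have [t1 [t2 [t10 t20 key]]] := lex_certificate hx0 m1 h12.
have [t1e|t1n] := eqVneq t1 0.
  exists 1 => // e /andP[e0 _] x hx.
  have := key x hx; rewrite t1e mul0r dotvBr pmulr_rge0 // subr_ge0 => h.
  by have := m1 x hx; rewrite !dotvBl !dotvZl; nra.
have t1p : 0 < t1 by rewrite lt_neqAle eq_sym t1n t10.
exists (t2 / t1) => [|e /andP[e0]]; first by rewrite divr_gt0.
rewrite ler_pdivlMr // => e1 x hx.
have := key x hx; have := m1 x hx; rewrite !dotvBr !dotvBl !dotvZl => h1 h2.
have s1 : 0 <= (t2 - e * t1) * (dotv c1 x0 - dotv c1 x).
  by rewrite mulr_ge0 // subr_ge0.
have s2 := ler_wpM2l (ltW e0) h2.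
suff : t2 * ((dotv c1 x - dotv c1 x0) - e * (dotv c2 x - dotv c2 x0)) <= 0.
  by rewrite pmulr_rle0 //; lra.
by nra.
Qed.

End LinearProgramming.

Section SupportFunction.
Context {R : realType} {k : nat}.
Implicit Types (S F : set 'rV[R]_k) (u v w z : 'rV[R]_k).

Definition argmax S w := [set z | S z /\ forall z', S z' -> dotv w z' <= dotv w z].

Lemma supp_fun_ub S u z : S z -> ((dotv u z)%:E <= supp_fun S u)%E.
Proof. by move=> hz; apply: ereal_sup_ubound; exists z. Qed.

Lemma supp_fun_argmax S u z : argmax S u z -> supp_fun S u = (dotv u z)%:E.
Proof.
move=> [hz hm]; apply/eqP; rewrite eq_le supp_fun_ub // andbT.
by apply: ge_ereal_sup => _ [z' hz' <-]; rewrite lee_fin; exact: hm.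
Qed.

Lemma supp_fun_bounded S u z1 : S z1 -> (supp_fun S u < +oo)%E ->
  exists M, forall z, S z -> dotv u z <= M.
Proof.
move=> h1; case E: (supp_fun S u) => [r| |] // _.
  by exists r => z hz; have := supp_fun_ub u hz; rewrite E lee_fin.
by have := supp_fun_ub u h1; rewrite E leeNy_eq.
Qed.

Lemma normal_cone_sub_argmax S F w : F `<=` argmax S w -> normal_cone S F w.
Proof. by move=> FA z /FA Fz; rewrite dotvC; apply/esym/supp_fun_argmax. Qed.

Lemma cone1_sub_normal_cone S w : cone1 w `<=` normal_cone S (argmax S w).
Proof.
move=> _ [t /= t0 <-] z [Sz zmax]; rewrite dotvC; apply/esym/supp_fun_argmax.
by split => // z' Sz'; rewrite !dotvZl ler_wpM2l // zmax.
Qed.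

Lemma normal_cone_argmax S F w z0 : (forall z, F z -> S z) -> normal_cone S F w ->
  F z0 -> argmax S w z0 /\ forall z, F z -> dotv w z = dotv w z0.
Proof.
move=> FS hw Fz0; have hz0 := hw z0 Fz0.
split=> [|z Fz]; first split=> [|z' Sz']; first exact: FS.
  by have := supp_fun_ub w Sz'; rewrite -hz0 lee_fin (dotvC z0).
by have := hw z Fz; rewrite -hz0 dotvC (dotvC z0) => -[].
Qed.

(* The normal cone of the empty face is everything, so a face whose normal cone
   is a ray is nonempty. *)
Lemma ray_normal_cone_face S F w : w != 0 -> cone1 w = normal_cone S F ->
  exists z0, F z0.
Proof.
move=> w0 hc; apply: contrapT => hne.
have : cone1 w (- w) by rewrite hc => z Fz; exfalso; apply: hne; exists z.
case=> t /= t0 /eqP; rewrite -subr_eq0 opprK -[X in _ + X]scale1r -scalerDl.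
by rewrite scaler_eq0 (negbTE w0) orbF => /eqP; lra.
Qed.

Lemma normal_cone_segment S F u v lam c1 c2 : (forall z, F z -> S z) ->
  0 < lam < 1 -> supp_fun S u = c1%:E -> supp_fun S v = c2%:E ->
  supp_fun S (lam *: u + (1 - lam) *: v) = (lam * c1 + (1 - lam) * c2)%:E ->
  normal_cone S F (lam *: u + (1 - lam) *: v) ->
  normal_cone S F u /\ normal_cone S F v.
Proof.
move=> FS /andP[l0 l1] hu hv huv hn.
have key z : F z -> dotv z u = c1 /\ dotv z v = c2.
  move=> Fz; have [+ +] := (supp_fun_ub u (FS z Fz), supp_fun_ub v (FS z Fz)).
  rewrite hu hv !lee_fin => h1 h2.
  have := hn z Fz; rewrite huv dotvDr !dotvZr !(dotvC z) => -[hz].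
  by split; nra.
by split=> z Fz; rewrite ?hu ?hv ((key z Fz).1, (key z Fz).2).
Qed.

End SupportFunction.

Lemma cone1_proportional {R : realType} k (w u v : 'rV[R]_k) :
  cone1 w u -> cone1 w v -> proportional u v.
Proof.
case=> s _ <- [t _ <-]; have [->|t0] := eqVneq t 0.
  by exists 0; right; rewrite !scale0r.
by exists (s / t); left; rewrite scalerA mulfVK.
Qed.

Section Nbeta.
Context {R : realType} (m : nat) (beta : 'I_m).
Local Notation NB := (@Nbeta R m beta).
Local Notation PB := (@polar R m NB).
Implicit Types (u v w y : 'rV[R]_m).

Lemma Nbeta_comb u v s t : NB u -> NB v -> 0 <= s -> 0 <= t -> NB (s *: u + t *: v).
Proof.
move=> [u1 u2] [v1 v2] s0 t0; split.
  by move=> i ib; rewrite !mxE addr_ge0 // mulr_ge0 //; [exact: u1 | exact: v1].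
rewrite (eq_bigr (fun i => s * u 0 i + t * v 0 i)) => [|i _]; last by rewrite !mxE.
by rewrite big_split -!mulr_sumr u2 v2 /= !mulr0 addr0.
Qed.

Lemma Nbeta_scale u t : NB u -> 0 <= t -> NB (t *: u).
Proof. by move=> hu t0; have := Nbeta_comb hu hu t0 (lexx 0); rewrite scale0r addr0. Qed.

Lemma Nbeta_add u v : NB u -> NB v -> NB (u + v).
Proof. by move=> hu hv; have := Nbeta_comb hu hv ler01 ler01; rewrite !scale1r. Qed.

Lemma Nbeta_pointed u : NB u -> NB (- u) -> u = 0.
Proof.
move=> [u1 u2] [v1 _].
have hz i : i != beta -> u 0 i = 0.
  move=> ib; apply/eqP; rewrite eq_le u1 // andbT.
  by have := v1 i ib; rewrite !mxE oppr_ge0.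
apply/rowP => i; rewrite mxE; have [->|ib] := eqVneq i beta; last exact: hz.
by move: u2; rewrite (bigD1 beta) //= big1 ?addr0.
Qed.

Lemma Nbeta_line_ray u w c : NB u -> u != 0 -> NB w -> w = c *: u -> cone1 u w.
Proof.
move=> hu u0 hw wE; have [c0|c0] := lerP 0 c; first by exists c.
suff : NB (- u) by move/(Nbeta_pointed hu)/eqP; rewrite (negbTE u0).
have -> : - u = (- c^-1) *: w by rewrite wE scalerA mulNr mulVf ?lt_eqF // scaleN1r.
by apply: Nbeta_scale hw _; rewrite oppr_ge0 invr_le0 ltW.
Qed.

Lemma split_not_proportional u w s c : NB u -> u != 0 -> NB w -> ~ cone1 u w ->
  s != 0 -> u + s *: w <> c *: (u - s *: w).
Proof.
move=> hu u0 hw nw s0 h.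
have E : ((1 + c) * s) *: w = (c - 1) *: u.
  apply/rowP => i; have := congr1 (fun v => v 0 i) h; rewrite !mxE => h'; lra.
have [c1|c1] := eqVneq (1 + c) 0.
  move/eqP: u0; apply; apply/rowP => i; have := congr1 (fun v => v 0 i) E.
  by rewrite !mxE c1; nra.
apply/nw/(Nbeta_line_ray hu u0 hw (c := (c - 1) / ((1 + c) * s))).
by rewrite mulrC -scalerA -E scalerA mulVf ?scale1r // mulf_neq0.
Qed.

Lemma Nbeta_perturb u w : NB u -> NB w ->
  (forall i, i != beta -> u 0 i = 0 -> w 0 i = 0) ->
  exists2 del, 0 < del & forall t, 0 < t <= del -> NB (u - t *: w).
Proof.
move=> hu hw supp.
have [i|del del0 Hdel] := @eventually_all R _ (fun i t => i != beta -> 0 <= u 0 i - t * w 0 i).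
  have [->|ib] := eqVneq i beta; first by exists 1 => // t _; rewrite eqxx.
  have [ui|ui] := eqVneq (u 0 i) 0.
    by exists 1 => // t _ _; rewrite ui (supp i ib ui) mulr0 subr0.
  have up : 0 < u 0 i by rewrite lt_neqAle eq_sym ui; exact: hu.1.
  have wp : 0 <= w 0 i by exact: hw.1.
  exists (u 0 i / (w 0 i + 1)); first by rewrite divr_gt0 // ltr_wpDl.
  by move=> t /andP[t0]; rewrite ler_pdivlMr ?ltr_wpDl // => ht _; nra.
exists del => // t ht; split=> [i ib|]; first by rewrite !mxE; apply: Hdel.
rewrite (eq_bigr (fun i => u 0 i - t * w 0 i)) => [|i _]; last by rewrite !mxE.
by rewrite sumrB -mulr_sumr hu.2 hw.2 mulr0 subr0.
Qed.

Lemma polar0 : PB 0.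
Proof. by move=> nu _; rewrite dotv0l. Qed.

Lemma polar_neg_unitv i : i != beta -> PB (- unitv i).
Proof. by move=> ib nu [hn _]; rewrite dotvNl dotv_unitvl oppr_le0; exact: hn. Qed.

Lemma polar_const s : PB (\row_(j < m) s).
Proof.
move=> nu [_ hs]; rewrite /dotv (eq_bigr (fun i => s * nu 0 i)) => [|i _].
  by rewrite -mulr_sumr hs mulr0.
by rewrite mxE.
Qed.

Lemma bipolar_Nbeta w : (forall y, PB y -> dotv y w <= 0) -> NB w.
Proof.
move=> hw; split=> [i ib|].
  by have := hw _ (polar_neg_unitv ib); rewrite dotvNl dotv_unitvl oppr_le0.
set s := \sum_i w 0 i.
have : dotv (\row_(j < m) s) w <= 0 by apply: hw; exact: polar_const.
rewrite /dotv (eq_bigr (fun i => s * w 0 i)) => [|i _]; last by rewrite mxE.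
rewrite -mulr_sumr -expr2 => hs; apply/eqP.
by rewrite -sqrf_eq0 eq_le hs sqr_ge0.
Qed.

Lemma polar_le_beta y i : PB y -> i != beta -> y 0 i <= y 0 beta.
Proof.
move=> hy ib; suff /hy : NB (unitv i - unitv beta) by rewrite dotvBr !dotv_unitvr subr_le0.
split=> [j jb|]; first by rewrite !mxE (negbTE jb) subr0 ler0n.
rewrite (eq_bigr (fun j => unitv i 0 j - unitv beta 0 j)) => [|j _]; last by rewrite !mxE.
by rewrite sumrB !sum_unitv subrr.
Qed.

Lemma dotv_sum0 y v : \sum_i v 0 i = 0 -> dotv y v = \sum_i v 0 i * (y 0 i - y 0 beta).
Proof.
move=> hs; rewrite /dotv.
have -> : \sum_i v 0 i * (y 0 i - y 0 beta) = \sum_i y 0 i * v 0 i - y 0 beta * \sum_i v 0 i.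
  by rewrite mulr_sumr -sumrB; apply: eq_bigr => i _; ring.
by rewrite hs mulr0 subr0.
Qed.

Lemma polar_orthogonal_support y v v' : PB y -> NB v ->
  \sum_i v' 0 i = 0 -> (forall i, v 0 i = 0 -> v' 0 i = 0) ->
  dotv y v = 0 -> dotv y v' = 0.
Proof.
move=> hy [v1 v2] s' hz hyv; rewrite (dotv_sum0 y s'); apply: big1 => i _.
have [->|ib] := eqVneq i beta; first by rewrite subrr mulr0.
have term_le0 j : v 0 j * (y 0 j - y 0 beta) <= 0.
  have [->|jb] := eqVneq j beta; first by rewrite subrr mulr0.
  by rewrite mulr_ge0_le0 ?v1 // subr_le0 polar_le_beta.
have : - (v 0 i * (y 0 i - y 0 beta)) = 0.
  apply: (@psumr_eq0P _ _ predT (fun j => - (v 0 j * (y 0 j - y 0 beta)))) => //.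
    by move=> j _; rewrite oppr_ge0.
  by rewrite sumrN -(dotv_sum0 y v2) hyv oppr0.
move/eqP; rewrite oppr_eq0 mulf_eq0 => /orP[/eqP v0|]; first by rewrite hz // mul0r.
by rewrite subr_eq0 => /eqP ->; rewrite subrr mulr0.
Qed.

End Nbeta.

Section MinkowskiSum.
Context {R : realType} (n m : nat) (a : 'I_m -> 'rV[R]_n) (X : set 'rV[R]_n)
  (beta : 'I_m).
Local Notation NB := (@Nbeta R m beta).
Local Notation PB := (@polar R m NB).
Local Notation P := (Pset X a beta).
Implicit Types (u v w : 'rV[R]_m) (x : 'rV[R]_n).

Definition negAmap w : 'rV[R]_n := - Amap a w.

Lemma negAmap_lin u v e : negAmap (u + e *: v) = negAmap u + e *: negAmap v.
Proof.
rewrite /negAmap /Amap scalerN -opprD; congr (- _).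
rewrite scaler_sumr -big_split; apply: eq_bigr => i _.
by rewrite !mxE scalerDl scalerA.
Qed.

Lemma negAmap_linB u v e : negAmap (u - e *: v) = negAmap u - e *: negAmap v.
Proof. by rewrite -scaleNr negAmap_lin scaleNr. Qed.

Lemma dotv_AmapT x w : dotv w (- AmapT a x) = dotv (negAmap w) x.
Proof.
rewrite dotvNr /negAmap dotvNl /Amap dotv_suml; congr (- _).
by apply: eq_bigr => i _; rewrite dotvZl !mxE mulrC.
Qed.

Lemma dotv_Pset w x y : dotv w (- AmapT a x + y) = dotv (negAmap w) x + dotv y w.
Proof. by rewrite dotvDr dotv_AmapT (dotvC w y). Qed.

Lemma Pset_mem x y : X x -> PB y -> P (- AmapT a x + y).
Proof. by move=> hx hy; exists x => //; exists y. Qed.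

Lemma PsetP z : P z -> exists x y, [/\ X x, PB y & z = - AmapT a x + y].
Proof. by case=> x hx [y hy <-]; exists x, y. Qed.

Lemma supp_fun_Pset w : NB w -> supp_fun P w = supp_fun X (negAmap w).
Proof.
move=> hw; apply/eqP; rewrite eq_le; apply/andP; split.
  apply: ge_ereal_sup => _ [z /PsetP [x [y [hx hy ->]]] <-].
  apply: le_trans (supp_fun_ub _ hx); rewrite lee_fin dotv_Pset.
  by have := hy w hw; lra.
apply: ge_ereal_sup => _ [x hx <-]; rewrite -dotv_AmapT -[- _]addr0.
exact/supp_fun_ub/Pset_mem/polar0.
Qed.

Lemma argmax_Pset w x y : NB w -> PB y -> dotv y w = 0 ->
  argmax X (negAmap w) x -> argmax P w (- AmapT a x + y).
Proof.
move=> hw hy yw [hx xmax]; split=> [|_ /PsetP [x' [y' [hx' hy' ->]]]].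
  exact: Pset_mem.
by rewrite !dotv_Pset yw; have := hy' w hw; have := xmax x' hx'; lra.
Qed.

Lemma argmax_Pset0 w x : NB w -> argmax X (negAmap w) x -> argmax P w (- AmapT a x).
Proof.
by move=> hw hx; rewrite -[- _]addr0; apply: argmax_Pset; rewrite ?dotv0l //; exact: polar0.
Qed.

Lemma argmax_PsetP w z : NB w -> argmax P w z -> exists x y,
  [/\ argmax X (negAmap w) x, PB y, dotv y w = 0 & z = - AmapT a x + y].
Proof.
move=> hw [/PsetP [x [y [hx hy ->]]] zmax].
have hyw : dotv y w <= 0 by exact: hy.
have y0 : dotv y w = 0.
  have := zmax _ (Pset_mem hx (@polar0 R m beta)); rewrite !dotv_Pset dotv0l; lra.
exists x, y; split=> //; split=> // x' hx'.
by have := zmax _ (Pset_mem hx' (@polar0 R m beta)); rewrite !dotv_Pset dotv0l y0; lra.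
Qed.

Lemma affine_common_argmax u v z0 : NB u -> NB v -> argmax P u z0 -> argmax P v z0 ->
  affine_on_segment (fun w => supp_fun X (negAmap w)) u v.
Proof.
move=> hu hv [Pz0 umax] [_ vmax].
exists (dotv u z0), (dotv v z0 - dotv u z0) => t /andP[t0 t1].
have vE : u + t *: (v - u) = (1 - t) *: u + t *: v.
  by apply/rowP => i; rewrite !mxE; ring.
have Nw : NB ((1 - t) *: u + t *: v) by apply: Nbeta_comb; rewrite ?subr_ge0.
rewrite vE -supp_fun_Pset // (@supp_fun_argmax _ _ _ _ z0).
  by rewrite dotvDl !dotvZl; congr EFin; ring.
split=> // z Pz; rewrite !dotvDl !dotvZl.
by have := umax z Pz; have := vmax z Pz; nra.
Qed.

Lemma normal_cone_argmax_Pset nu x0 w : NB nu -> argmax X (negAmap nu) x0 ->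
  normal_cone P (argmax P nu) w ->
  [/\ NB w, forall i, i != beta -> nu 0 i = 0 -> w 0 i = 0,
      argmax X (negAmap w) x0 &
      forall x, argmax X (negAmap nu) x -> dotv (negAmap w) x = dotv (negAmap w) x0].
Proof.
move=> Nn hx0 hw.
have [[Pz0 wmax] wconst] := normal_cone_argmax (fun z (hz : argmax P nu z) => hz.1) hw (argmax_Pset0 Nn hx0).
have Nw : NB w.
  apply: bipolar_Nbeta => y hy; have := wmax _ (Pset_mem hx0.1 hy).
  by rewrite dotv_Pset -[- AmapT a x0]addr0 dotv_Pset dotv0l addr0; lra.
split=> //.
- move=> i ib nui; have hy := polar_neg_unitv ib.
  have /wconst : argmax P nu (- AmapT a x0 + - unitv i).
    by apply: argmax_Pset; rewrite // dotvNl dotv_unitvl nui oppr0.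
  by rewrite -[X in _ = dotv _ X]addr0 !dotv_Pset dotv0l dotvNl dotv_unitvl; lra.
- split=> [|x hx]; first exact: hx0.1.
  by have := wmax _ (Pset_mem hx (@polar0 R m beta)); rewrite addr0 !dotv_AmapT.
- by move=> x /(argmax_Pset0 Nn)/wconst; rewrite !dotv_AmapT.
Qed.

(* A nonzero nu in N_beta whose ray is a cone of the outer normal fan of P is an
   X-circuit: a decomposition of nu along which sigma is affine has both
   endpoints in the same normal cone, i.e. on the ray of nu. *)
Lemma ray_is_circuit nu : NB nu -> nu != 0 -> outer_normal_fan P (cone1 nu) ->
  X_circuit X a beta nu.
Proof.
move=> Nn n0 [F [[w0 FE] Hc]].
have FP z : F z -> P z by rewrite FE => -[].
have [z0 Fz0] := ray_normal_cone_face n0 Hc.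
have hnu : normal_cone P F nu by rewrite -Hc; exists 1; [exact: ler01 | exact: scale1r].
split => //; first by rewrite -supp_fun_Pset // -(hnu z0 Fz0) ltry.
move=> [nu1 [nu2 [lam [[N1 N2] np l01 nuE [c [dd hc]]]]]].
have seg s : 0 <= s <= 1 ->
    supp_fun P (s *: nu1 + (1 - s) *: nu2) = (c + (1 - s) * dd)%:E.
  move=> /andP[s0 s1]; rewrite supp_fun_Pset; last first.
    by apply: Nbeta_comb; rewrite ?subr_ge0.
  rewrite -hc; last by rewrite subr_ge0 s1 gerBl.
  by congr (supp_fun X (negAmap _)); apply/rowP => i; rewrite !mxE; ring.
have g1 : supp_fun P nu1 = c%:E.
  by have := seg 1; rewrite subrr scale0r scale1r addr0 mul0r addr0 lexx ler01; apply.
have g2 : supp_fun P nu2 = (c + dd)%:E.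
  by have := seg 0; rewrite subr0 scale1r scale0r add0r mul1r lexx ler01; apply.
have gnu : supp_fun P nu = (lam * c + (1 - lam) * (c + dd))%:E.
  case/andP: l01 => l0 l1; rewrite nuE seg ?ltW ?l0 ?l1 //.
  by congr (_%:E); ring.
rewrite nuE in hnu gnu.
have [h1 h2] := normal_cone_segment FP l01 g1 g2 gnu hnu.
by apply: np; apply: (@cone1_proportional _ _ nu); rewrite Hc.
Qed.

End MinkowskiSum.

Section Polyhedral.
Context {R : realType} (n m p : nat) (a : 'I_m -> 'rV[R]_n) (X : set 'rV[R]_n)
  (beta : 'I_m) (C : 'I_p -> 'rV[R]_n) (d : 'I_p -> R).
Hypothesis XE : X = [set x | forall j, dotv (C j) x <= d j].
Hypothesis X0 : X !=set0.
Local Notation NB := (@Nbeta R m beta).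
Local Notation P := (Pset X a beta).
Local Notation negAmap := (negAmap a).

Lemma circuit_argmax nu : X_circuit X a beta nu -> exists x0, argmax X (negAmap nu) x0.
Proof.
case=> _ _ fin _; have [x1 hx1] := X0; have [M hM] := supp_fun_bounded hx1 fin.
rewrite XE in hx1 hM *; have [x0 hx0 m1] := lp_attain (ex_intro _ x1 hx1) hM.
by exists x0.
Qed.

(* Otherwise take w in it off the ray; for small e > 0 both nu + e w and nu - e w
   lie in N_beta and are maximized at -A^T x0 (by lexicographic perturbation),
   so sigma is affine on the non-degenerate segment between them. *)
Lemma circuit_normal_cone nu : X_circuit X a beta nu ->
  normal_cone P (argmax P nu) = cone1 nu.
Proof.
move=> circ; have [Nn n0 _ nodec] := circ; have [x0 hx0] := circuit_argmax circ.
apply/seteqP; split=> [w hw|]; last exact: cone1_sub_normal_cone.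
apply: contrapT => wray.
have [Nw supp wx0 wconst] := normal_cone_argmax_Pset Nn hx0 hw.
have [eL eL0 HL] : exists2 eL, 0 < eL & forall e, 0 < e <= eL ->
    argmax X (negAmap (nu - e *: w)) x0.
  move: hx0 wx0 wconst; rewrite XE => -[hx0 m1] [_ m2] wconst.
  have h12 x : in_poly C d x -> dotv (negAmap nu) x = dotv (negAmap nu) x0 ->
      dotv (negAmap w) x0 <= dotv (negAmap w) x.
    by move=> hx e; rewrite (wconst x) //; split=> // x' hx'; rewrite e; exact: m1.
  have [eL eL0 HL] := lp_lex_perturb hx0 m1 m2 h12.
  by exists eL => // e he; split=> // x hx; rewrite negAmap_linB; exact: HL.
have [del del0 Hdel] := Nbeta_perturb Nn Nw supp.
pose e := Num.min eL del.
have e0 : 0 < e by rewrite lt_min eL0 del0.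
have N1 : NB (nu + e *: w) by apply: Nbeta_add Nn (Nbeta_scale Nw (ltW e0)).
have N2 : NB (nu - e *: w) by apply: Hdel; rewrite e0 ge_min lexx orbT.
have x0max1 : argmax X (negAmap (nu + e *: w)) x0.
  split=> [|x hx]; first exact: hx0.1.
  rewrite negAmap_lin !dotvDl !dotvZl.
  by have := hx0.2 x hx; have := wx0.2 x hx; nra.
have x0max2 : argmax X (negAmap (nu - e *: w)) x0.
  by apply: HL; rewrite e0 ge_min lexx.
apply: nodec; exists (nu + e *: w), (nu - e *: w), (1 / 2); split=> //.
- have e_neq0 : e != 0 by rewrite gt_eqF.
  move=> [c [h|h]]; first exact: (split_not_proportional Nn n0 Nw wray e_neq0 h).
  apply: (split_not_proportional Nn n0 Nw wray (s := - e) (c := c)).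
    by rewrite oppr_eq0.
  by rewrite scaleNr opprK.
- by apply/andP; split; lra.
- by apply/rowP => i; rewrite !mxE; lra.
- exact: affine_common_argmax N1 N2 (argmax_Pset0 N1 x0max1) (argmax_Pset0 N2 x0max2).
Qed.

Definition signature nu (JZ : {set 'I_p} * {set 'I_m}) :=
  (forall x, X x ->
     (argmax X (negAmap nu) x <-> forall j, j \in JZ.1 -> dotv (C j) x = d j)) /\
  JZ.2 = [set i | nu 0 i == 0]%SET.

Lemma circuit_signature nu : X_circuit X a beta nu -> exists JZ, signature nu JZ.
Proof.
move=> /circuit_argmax [x0]; rewrite /signature XE => -[hx0 m1].
have [J HJ] := lp_optimal_face hx0 m1.
exists (J, [set i | nu 0 i == 0]%SET); split=> // x hx /=.
by rewrite -HJ //; split=> [[] //|]; split.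
Qed.

(* A normalized circuit is determined by its signature: a circuit nu' with the
   signature of nu is an outer normal of the face of P maximizing nu, hence lies
   on the ray of nu. *)
Lemma signature_unique nu nu' JZ :
  X_circuit X a beta nu -> X_circuit X a beta nu' ->
  nu 0 beta = -1 -> nu' 0 beta = -1 -> signature nu JZ -> signature nu' JZ -> nu' = nu.
Proof.
move=> circ [Nn' _ _ _] b1 b2 [opt1 zero1] [opt2 zero2]; have [Nn _ _ _] := circ.
have : cone1 nu nu'.
  rewrite -(circuit_normal_cone circ); apply: normal_cone_sub_argmax.
  move=> _ /(argmax_PsetP Nn) [x [y [xmax hy y0 ->]]].
  apply: argmax_Pset => //.
    apply: (polar_orthogonal_support hy Nn Nn'.2) => // i nui.
    have : i \in JZ.2 by rewrite zero1 inE nui.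
    by rewrite zero2 inE => /eqP.
  by apply/(opt2 x xmax.1)/(opt1 x xmax.1).
case=> t _ nuE; have : t * nu 0 beta = nu' 0 beta by rewrite -nuE mxE.
rewrite b1 b2 => /eqP; rewrite mulrN1 eqr_opp => /eqP t1.
by rewrite -nuE t1 scale1r.
Qed.

(* Signatures range over a finite type, so there are finitely many normalized
   circuits. *)
Lemma finite_normalized_circuits :
  finite_set [set nu : 'rV[R]_m | X_circuit X a beta nu /\ nu 0 beta = -1].
Proof.
set A := [set nu | _ /\ _].
pose pick JZ := xget 0 [set nu | A nu /\ signature nu JZ].
apply: (@sub_finite_set _ _ [set pick JZ | JZ in setT]); last first.
  exact/finite_image/finite_finset.
move=> nu [circ b1]; have [JZ hJZ] := circuit_signature circ.
exists JZ => //.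
have [[circ' b2] hJZ'] := @xgetI _ 0 [set nu | A nu /\ signature nu JZ] nu
  (conj (conj circ b1) hJZ).
exact: signature_unique circ circ' b1 b2 hJZ hJZ'.
Qed.

End Polyhedral.

Unset Implicit Arguments.

Theorem theorem3p7 (R : realType) (n m : nat) (a : 'I_m -> 'rV[R]_n)
  (X : set 'rV[R]_n) (beta : 'I_m) :
  injective a ->
  X !=set0 ->
  is_polyhedron X ->
  (forall nu : 'rV[R]_m, Nbeta beta nu -> nu != 0 ->
     (X_circuit X a beta nu <->
      (outer_normal_fan (Pset X a beta) (cone1 nu)))) /\
  finite_set [set lam : 'rV[R]_m | X_circuit X a beta lam /\ lam 0 beta = -1].
Proof.
move=> _ X0 [p [C [d XE]]]; split; last exact: finite_normalized_circuits XE X0.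
move=> nu Nn n0; split=> [circ|]; last exact: ray_is_circuit.
exists (argmax (Pset X a beta) nu); split; first by exists nu.
by rewrite (circuit_normal_cone XE X0 circ).
Qed.
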